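(* Let $v\in[m-1]$ and let $\hat{\mathcal{T}},\hat{\mathcal{T}}'$ be triangulations of $C([m-1]_{v+},n)$ with $\hat{\mathcal{T}}\leqslant_2\hat{\mathcal{T}}'$. Then $\hat{\mathcal{T}}[x\to v\leftarrow y]\leqslant_2\hat{\mathcal{T}}'[x\to v\leftarrow y]$.
   Context: For a finite totally ordered set $V$, $C(V,n)$ is the cyclic polytope, the convex hull in $\mathbb{R}^n$ of $p_n(t_v)=(t_v,\dots,t_v^n)$, $v\in V$, with $t_v$ increasing; $C(m,n)=C([m],n)$. A triangulation of $C(V,n)$ is a set of $(n+1)$-subsets of $V$ whose geometric simplices form a simplicial complex with union $C(V,n)$. Each triangulation $\mathcal{T}$ determines the piecewise-linear map $\sigma_{\mathcal{T}}:C(V,n)\to\mathbb{R}^{n+1}$ mapping each simplex of $\mathcal{T}$ affinely with $p_n(t_s)\mapsto p_{n+1}(t_s)$; the second higher Stasheff--Tamari order is $\mathcal{T}\leqslant_2\mathcal{T}'$ iff $\sigma_{\mathcal{T}}(z)_{n+1}\leqslant\sigma_{\mathcal{T}'}(z)_{n+1}$ for all $z\in C(V,n)$. For $v\in[m-1]$, $[m-1]_{v+}=\{1,\dots,v-1,x,y,v+1,\dots,m-1\}$ ordered with $v-1<x<y<v+1$. For $S\subseteq[m-1]_{v+}$, $S[x\to v\leftarrow y]=S$ if $S\cap\{x,y\}=\emptyset$ and $(S\setminus\{x,y\})\cup\{v\}$ otherwise; for a triangulation $\hat{\mathcal{T}}$ of $C([m-1]_{v+},n)$, $\hat{\mathcal{T}}[x\to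 v\leftarrow y]=\{S[x\to v\leftarrow y]:S\in\hat{\mathcal{T}}\}\cap\binom{[m-1]}{n+1}$, a triangulation of $C(m-1,n)$. *)

From HB Require Import structures.
From mathcomp Require Import all_boot all_order all_algebra.
From mathcomp Require Import reals.
Set Implicit Arguments. Unset Strict Implicit. Unset Printing Implicit Defensive.
Import Order.TTheory GRing.Theory Num.Theory.
Local Open Scope ring_scope.

(* Vertex set: a finite totally ordered set of size k, realised as 'I_k
   with its natural order; t : 'I_k -> R are the (increasing) parameters. *)

Definition pt (R : ringType) (n : nat) (a : R) : 'rV[R]_n :=
  \row_(j < n) a ^+ j.+1.

Definition increasing (R : realType) (k : nat) (t : 'I_k -> R) :=
  forall i j : 'I_k, (i < j)%N -> t i < t j.

Definition bary (R : realType) (k n : nat) (t : 'I_k -> R) (S : {set 'I_k})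
    (z : 'rV[R]_n) (lam : 'I_k -> R) : Prop :=
  [/\ forall i, 0 <= lam i,
      forall i, i \notin S -> lam i = 0,
      \sum_i lam i = 1
    & z = \sum_i lam i *: pt n (t i)].

Definition in_hull (R : realType) (k n : nat) (t : 'I_k -> R) (S : {set 'I_k})
    (z : 'rV[R]_n) : Prop :=
  exists lam, bary t S z lam.

Definition cyclic_polytope (R : realType) (k n : nat) (t : 'I_k -> R)
    (z : 'rV[R]_n) : Prop :=
  in_hull t [set: 'I_k] z.

Definition aff_indep (R : realType) (k n : nat) (t : 'I_k -> R) (S : {set 'I_k}) :=
  forall lam : 'I_k -> R,
    (forall i, i \notin S -> lam i = 0) ->
    \sum_i lam i = 0 ->
    \sum_i lam i *: pt n (t i) = 0 ->
    forall i, lam i = 0.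

Definition meet_is_face (R : realType) (k n : nat) (t : 'I_k -> R)
    (S S' : {set 'I_k}) :=
  exists2 F : {set 'I_k}, F \subset S &
    forall z : 'rV[R]_n, (in_hull t S z /\ in_hull t S' z) <-> in_hull t F z.

Definition triangulation (R : realType) (k n : nat) (t : 'I_k -> R)
    (T : {set {set 'I_k}}) : Prop :=
  [/\ forall S, S \in T -> #|S| = n.+1,
      forall S, S \in T -> aff_indep n t S,
      forall S S', S \in T -> S' \in T ->
        meet_is_face n t S S' /\ meet_is_face n t S' S
    & forall z : 'rV[R]_n,
        cyclic_polytope t z <-> exists2 S, S \in T & in_hull t S z].

(* second higher Stasheff--Tamari order: the last coordinate of sigma_T(z),
   computed through the (affine) lift on any simplex of T containing z,
   is <= that for T' at every z in C(V,n). *)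
Definition le2 (R : realType) (k n : nat) (t : 'I_k -> R)
    (T T' : {set {set 'I_k}}) : Prop :=
  forall (z : 'rV[R]_n) (S S' : {set 'I_k}) (lam lam' : 'I_k -> R),
    cyclic_polytope t z ->
    S \in T -> S' \in T' -> bary t S z lam -> bary t S' z lam' ->
    \sum_i lam i * t i ^+ n.+1 <= \sum_i lam' i * t i ^+ n.+1.

(* [m-1]_{v+} = {1,..,v-1,x,y,v+1,..,m-1} is realised as 'I_m (0-indexed):
   positions 0..v-2 are 1..v-1, position v-1 is x, position v is y,
   positions v+1..m-1 are v+1..m-1.  [m-1] is realised as 'I_(m-1), with
   position j being j+1.  The map x -> v <- y (identity elsewhere) is: *)
Definition contr_nat (v i : nat) : nat := if (i < v)%N then i else i.-1.

Definition contr_set (m v : nat) (S : {set 'I_m}) : {set 'I_(m.-1)} :=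
  [set j : 'I_(m.-1) | [exists i in S, nat_of_ord j == contr_nat v i]].

Definition contr_triang (m v n : nat) (T : {set {set 'I_m}})
    : {set {set 'I_(m.-1)}} :=
  [set S' : {set 'I_(m.-1)} |
     [exists S in T, S' == contr_set v S] && (#|S'| == n.+1)].

From HB Require Import structures.
From mathcomp Require Import all_boot all_order all_algebra.
From mathcomp Require Import reals.
From mathcomp Require Import zify lra.
Import Order.TTheory GRing.Theory Num.Theory.
Local Open Scope ring_scope.

(* Suppose the order fails for the contractions at a point z, with
   barycentric weights lam in a simplex of T[x -> v <- y] and lam' in one of
   T'[x -> v <- y].  Then c = lam - lam' has vanishing moments of orders
   0..n and a positive moment of order n+1; this forces n+2 indices
   f_0 < ... < f_(n+1) at which c strictly alternates in sign, ending
   positive, since otherwise a monic polynomial of degree n+1 of opposite sign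
   to c at every node would make the top moment nonpositive.  Positive entries
   of c lie in the contracted simplex coming from S in T, negative ones in the
   one coming from S' in T'; as the contraction is monotone they lift to
   vertices j_0 < ... < j_(n+1) of [m-1]_{v+}, alternately in S and S'.  The
   points p_n(t_(j_a)) form a circuit: the solution w of the Vandermonde
   system (moments 0..n vanish, moment n+1 equals 1) has sign (-1)^(n+1-a)
   at a, so its positive and negative parts, normalised, are barycentric
   coordinates of one point in the simplices of S and S' at which the lift
   of T is strictly higher than that of T', contradicting T <=_2 T'. *)

Set Implicit Arguments. Unset Strict Implicit.

Section SignAlternation.
Variable R : realDomainType.
Implicit Types (c t : nat -> R) (k L : nat).

(* [alternating c k L]: there are indices i_1 < ... < i_L < k at which c is
   nonzero with alternating signs, the last one (c i_L) positive. *)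
Fixpoint alternating c k L : bool :=
  if L is L'.+1 then [exists p : 'I_k, (0 < c p) && alternating (fun i => - c i) p L']
  else true.

Lemma alternating_leq c k L : alternating c k L -> (L <= k)%N.
Proof.
elim: L c k => [//|L IH] c k /existsP[p /andP[_ /IH]].
by have := ltn_ord p; lia.
Qed.

Lemma alternating_full c k :
  alternating c k k -> forall a, (a < k)%N -> 0 < c a * (-1) ^+ (k.-1 - a).
Proof.
elim: k c => [//|k IH] c /existsP[p /andP[cp /[dup] /alternating_leq pk alt]] a ak.
have {pk} pE : nat_of_ord p = k by have := ltn_ord p; lia.
rewrite {}pE in cp alt.
have [ak'|ka] := ltnP a k; last first.
  have -> : a = k by lia.
  by rewrite /= subnn mulr1.
have -> : (k - a = (k.-1 - a).+1)%N by lia.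
by rewrite exprS mulrA mulrN1; exact: IH alt a ak'.
Qed.

Lemma alternating_subseq c k L : alternating c k L -> exists f : nat -> nat,
  [/\ forall a, (a < L)%N -> (f a < k)%N,
      forall a b, (a < b < L)%N -> (f a < f b)%N &
      forall a, (a < L)%N -> 0 < c (f a) * (-1) ^+ (L.-1 - a)].
Proof.
elim: L c k => [|L IH] c k /=; first by exists id; split => //; lia.
case/existsP=> p /andP[cp /IH [f [fk finc fsgn]]].
exists (fun a => if (a < L)%N then f a else p); split.
- move=> a aL; case: ifP => al; last exact: ltn_ord.
  by have := fk a al; have := ltn_ord p; lia.
- move=> a b /andP[ab bL]; have aL : (a < L)%N by lia.
  rewrite aL; case: ifP => bl; first by apply: finc; rewrite ab bl.
  exact: fk.
- move=> a aL; case: ifP => al; last first.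
    have -> : (L - a = 0)%N by lia.
    by rewrite mulr1.
  have -> : (L - a = (L.-1 - a).+1)%N by lia.
  by rewrite exprS mulrA mulrN1; exact: fsgn a al.
Qed.

Lemma increasing_le t k : (forall i j, (i < j < k)%N -> t i < t j) ->
  forall i j, (i <= j < k)%N -> t i <= t j.
Proof.
move=> tinc i j /andP[ij jk]; case: (ltngtP i j) => [lt_ij|gt_ij|->//].
  by apply/ltW/tinc; rewrite lt_ij.
by have := leq_trans gt_ij ij; rewrite ltnn.
Qed.

Lemma sum_horner c t k (q : {poly R}) :
  \sum_(i < k) c i * q.[t i] = \sum_(e < size q) q`_e * \sum_(i < k) c i * t i ^+ e.
Proof.
under eq_bigr do rewrite horner_coef big_distrr /=.
rewrite exchange_big /=; apply: eq_bigr => e _; rewrite big_distrr /=.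
by apply: eq_bigr => i _; rewrite mulrCA.
Qed.

Lemma nonpos_poly t c k L : (forall i j, (i < j < k)%N -> t i < t j) ->
  (forall i, (i < k)%N -> c i <= 0) ->
  exists q : {poly R}, [/\ q \is monic, size q = L.+1,
    forall i, (i < k)%N -> c i * q.[t i] <= 0 & forall x, t k.-1 < x -> 0 < q.[x]].
Proof.
move=> tinc c_le0; have t0_le i : (i < k)%N -> t 0%N <= t i.
  by move=> ik; apply: increasing_le tinc _ _ _; rewrite ik.
exists (('X - (t 0%N - 1)%:P) ^+ L); split.
- by rewrite monic_exp // monicXsubC.
- by rewrite size_exp_XsubC.
- move=> i ik; rewrite horner_exp hornerXsubC mulr_le0_ge0 ?c_le0 //.
  by apply: exprn_ge0; have := t0_le i ik; lra.
- move=> x xk; rewrite horner_exp hornerXsubC exprn_gt0 //.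
  have [k0|k_gt0] := posnP k; first by rewrite k0 in xk; lra.
  by have := t0_le k.-1; rewrite ltn_predL k_gt0 => /(_ isT); lra.
Qed.

(* Contrapositive of [alternating_of_moments]: the polynomial gets a root at
   the last index where c is positive and recurses below it on [- c]. *)
Lemma not_alternating_poly t c k L : (forall i j, (i < j < k)%N -> t i < t j) ->
  ~~ alternating c k L.+1 ->
  exists q : {poly R}, [/\ q \is monic, size q = L.+1,
    forall i, (i < k)%N -> c i * q.[t i] <= 0 & forall x, t k.-1 < x -> 0 < q.[x]].
Proof.
elim: L c k => [|L IH] c k tinc nalt.
  apply: nonpos_poly => // i ik; rewrite leNgt; apply: contra nalt => ci.
  by apply/existsP; exists (Ordinal ik); rewrite ci.
have [/existsP[p0 cp0]|/existsPn cneg] := boolP [exists p : 'I_k, 0 < c p]; last first.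
  by apply: nonpos_poly => // i ik; rewrite leNgt (cneg (Ordinal ik)).
have [p cp plast] := @arg_maxnP _ p0 (fun p => 0 < c p) val cp0.
have pk := ltn_ord p.
have nalt' : ~~ alternating (fun i => - c i) p L.+1.
  by apply: contra nalt => alt; apply/existsP; exists p; rewrite cp.
have tinc' i j : (i < j < p)%N -> t i < t j by move=> ijp; apply: tinc; lia.
have [q0 [q0mon q0size q0sgn q0pos]] := IH _ _ tinc' nalt'.
have q0_gt0 x : t p < x -> 0 < q0.[x].
  move=> px; apply: q0pos.
  have : t p.-1 <= t p by apply: increasing_le tinc _ _ _; lia.
  lra.
exists (('X - (t p)%:P) * q0); split.
- by rewrite monicMl // monicXsubC.
- by rewrite size_Mmonic ?monicXsubC -?size_poly_eq0 ?q0size ?size_XsubC.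
- move=> i ik; rewrite hornerM hornerXsubC mulrCA.
  case: (ltngtP i p) => [ip|pi|->]; last by rewrite subrr mul0r.
  + have := q0sgn i ip; have := tinc i p; rewrite ip pk => /(_ isT) tip.
    by rewrite mulNr => cq; apply: mulr_le0_ge0; lra.
  + have ci : c i <= 0 by rewrite leNgt; apply/negP => /(plast (Ordinal ik)) /=; lia.
    have tpi : t p < t i by apply: tinc; rewrite pi ik.
    by apply: mulr_ge0_le0; [lra | rewrite mulr_le0_ge0 // ltW // q0_gt0].
- move=> x xk; rewrite hornerM hornerXsubC.
  have : t p <= t k.-1 by apply: increasing_le tinc _ _ _; lia.
  by move=> tpk; rewrite mulr_gt0 ?q0_gt0; lra.
Qed.

Lemma alternating_of_moments t c k L : (forall i j, (i < j < k)%N -> t i < t j) ->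
  (forall e, (e < L)%N -> \sum_(i < k) c i * t i ^+ e = 0) ->
  0 < \sum_(i < k) c i * t i ^+ L -> alternating c k L.+1.
Proof.
move=> tinc moment0 momentL; apply: contraT => /(not_alternating_poly tinc).
case=> q [qmon qsize qsgn _].
have : \sum_(i < k) c i * q.[t i] <= 0.
  by rewrite -oppr_ge0 -sumrN; apply: sumr_ge0 => i _; rewrite oppr_ge0 qsgn.
rewrite sum_horner qsize big_ord_recr /= big1 => [|e _]; last by rewrite moment0 ?mulr0.
by have /monicP := qmon; rewrite /lead_coef qsize /= => ->; rewrite add0r mul1r; lra.
Qed.

End SignAlternation.

Section OrdinalSignAlternation.
Variables (R : realDomainType) (k : nat) (c t : 'I_k -> R).
Hypothesis t_increasing : forall i j : 'I_k, (i < j)%N -> t i < t j.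

Let ext (f : 'I_k -> R) (i : nat) : R := oapp f 0 (insub i).

Let extE f (i : 'I_k) : ext f i = f i.
Proof. by rewrite /ext valK. Qed.

Let alternating_ext L : (forall e, (e < L)%N -> \sum_i c i * t i ^+ e = 0) ->
  0 < \sum_i c i * t i ^+ L -> alternating (ext c) k L.+1.
Proof.
move=> moment0 momentL; apply: (alternating_of_moments (t := ext t)).
- move=> i j /andP[ij jk]; have ik := ltn_trans ij jk.
  by rewrite -[i]/(val (Ordinal ik)) -[j]/(val (Ordinal jk)) !extE; exact: t_increasing.
- by move=> e eL; under eq_bigr do rewrite !extE; exact: moment0.
- by under eq_bigr do rewrite !extE.
Qed.

Lemma moment_sign_changes L :
  (forall e, (e < L)%N -> \sum_i c i * t i ^+ e = 0) -> 0 < \sum_i c i * t i ^+ L ->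
  exists2 f : 'I_L.+1 -> 'I_k, (forall a b : 'I_L.+1, (a < b)%N -> (f a < f b)%N) &
    forall a, 0 < c (f a) * (-1) ^+ (L - a).
Proof.
move=> moment0 momentL.
have [f [fk finc fsgn]] := alternating_subseq (alternating_ext moment0 momentL).
exists (fun a : 'I_L.+1 => Ordinal (fk a (ltn_ord a))) => [a b ab | a].
  by apply: finc; rewrite ab ltn_ord.
by have := fsgn a (ltn_ord a); rewrite -[f a]/(val (Ordinal (fk a (ltn_ord a)))) extE.
Qed.

Lemma moment_signs : (forall e, (e < k.-1)%N -> \sum_i c i * t i ^+ e = 0) ->
  0 < \sum_i c i * t i ^+ k.-1 -> forall a, 0 < c a * (-1) ^+ (k.-1 - a).
Proof.
move=> moment0 momentk a; have k_gt0 : (0 < k)%N := leq_ltn_trans (leq0n a) (ltn_ord a).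
have := alternating_ext moment0 momentk; rewrite prednK // => /alternating_full.
by move=> /(_ a (ltn_ord a)); rewrite extE.
Qed.

End OrdinalSignAlternation.

Lemma moment_dual_basis (F : fieldType) k (x : 'I_k.+1 -> F) : injective x ->
  exists w : 'I_k.+1 -> F, forall e, (e <= k)%N -> \sum_a w a * x a ^+ e = (e == k)%:R.
Proof.
move=> xinj; pose V := Vandermonde k.+1 (\row_a x a).
have Vunit : V \in unitmx.
  rewrite unitmxE unitfE det_Vandermonde; apply/prodf_neq0 => i _.
  apply/prodf_neq0 => j ij; rewrite !mxE subr_eq0; apply/eqP => /xinj ji.
  by rewrite ji ltnn in ij.
pose w : 'cV_k.+1 := invmx V *m delta_mx ord_max ord0.
exists (fun a => w a ord0) => e ek.
have := congr1 (fun A : 'cV_k.+1 => A (inord e) ord0) (mulKVmx Vunit (delta_mx ord_max ord0)).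
rewrite !mxE /= -val_eqE /= inordK // eqxx andbT => <-.
by apply: eq_bigr => a _; rewrite !mxE inordK // mulrC.
Qed.

Definition pushforward (I J : finType) (V : nmodType) (j : I -> J) (g : I -> V) (i : J) : V :=
  \sum_(a | j a == i) g a.

Lemma sum_pushforwardZ (I J : finType) (K : pzRingType) (V : lmodType K)
    (j : I -> J) (g : I -> K) (F : J -> V) :
  \sum_i pushforward j g i *: F i = \sum_a g a *: F (j a).
Proof.
rewrite (partition_big j predT) //=; apply: eq_bigr => i _.
by rewrite scaler_suml; apply: eq_bigr => a /eqP ->.
Qed.

Lemma sum_pushforwardM (I J : finType) (K : pzRingType) (j : I -> J) (g : I -> K) (F : J -> K) :
  \sum_i pushforward j g i * F i = \sum_a g a * F (j a).
Proof. exact: (sum_pushforwardZ (V := K^o)). Qed.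

Section Barycentric.
Variables (R : realType) (m n : nat) (t : 'I_m -> R).
Implicit Types (S : {set 'I_m}) (z : 'rV[R]_n) (lam : 'I_m -> R).

Lemma sum_pt_coord (I : finType) (g x : I -> R) (e : 'I_n) :
  (\sum_i g i *: pt n (x i)) 0 e = \sum_i g i * x i ^+ e.+1.
Proof. by rewrite summxE; apply: eq_bigr => i _; rewrite !mxE. Qed.

Lemma bary_diff_moments S S' z lam lam' : bary t S z lam -> bary t S' z lam' ->
  forall e, (e < n.+1)%N -> \sum_i (lam i - lam' i) * t i ^+ e = 0.
Proof.
case=> _ _ sum1 zE; case=> _ _ sum1' zE' e en.
under eq_bigr do rewrite mulrBl; rewrite sumrB; apply/eqP; rewrite subr_eq0; apply/eqP.
case: e en => [_|e en].
  by under eq_bigr do rewrite mulr1; under [RHS]eq_bigr do rewrite mulr1; rewrite sum1 sum1'.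
have := congr1 (fun z : 'rV_n => z 0 (Ordinal (en : (e < n)%N))) (etrans (esym zE) zE').
by rewrite /= !sum_pt_coord.
Qed.

Lemma bary_mem S z lam i : bary t S z lam -> lam i != 0 -> i \in S.
Proof. by case=> _ lam0 _ _; apply: contraR => /lam0 ->. Qed.

Lemma bary_cyclic_polytope S z lam : bary t S z lam -> cyclic_polytope t z.
Proof. by case=> lam_ge0 _ sum1 zE; exists lam; split => // i; rewrite in_setT. Qed.

Lemma bary_pushforward N S (j : 'I_N -> 'I_m) (g : 'I_N -> R) :
  (forall a, 0 <= g a) -> \sum_a g a = 1 -> (forall a, g a != 0 -> j a \in S) ->
  bary t S (\sum_a g a *: pt n (t (j a))) (pushforward j g).
Proof.
move=> g_ge0 sum1 gS; split.
- by move=> i; apply: sumr_ge0.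
- move=> i iS; apply: big1 => a /eqP jai; apply/eqP; apply: contraR iS => ga.
  by rewrite -jai gS.
- by rewrite -sum1 (partition_big j predT).
- by rewrite sum_pushforwardZ.
Qed.

Lemma bary_of_circuit N S S' (j : 'I_N -> 'I_m) (u v : 'I_N -> R) :
  (forall a, 0 <= u a) -> (forall a, 0 <= v a) ->
  (forall a, u a != 0 -> j a \in S) -> (forall a, v a != 0 -> j a \in S') ->
  (forall e, (e <= n)%N -> \sum_a (u a - v a) * t (j a) ^+ e = 0) ->
  0 < \sum_a (u a - v a) * t (j a) ^+ n.+1 ->
  exists z lam lam', [/\ bary t S z lam, bary t S' z lam' &
    \sum_i lam' i * t i ^+ n.+1 < \sum_i lam i * t i ^+ n.+1].
Proof.
move=> u_ge0 v_ge0 uS vS moment0 momentn.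
set W := \sum_a u a.
have sum_v : \sum_a v a = W.
  have := moment0 0%N isT; under eq_bigr do rewrite mulr1.
  by rewrite sumrB => /eqP; rewrite subr_eq0 => /eqP.
have W_gt0 : 0 < W.
  rewrite lt_def sumr_ge0 // andbT; apply: contraTneq momentn => W0.
  have u0 := psumr_eq0P (fun a _ => u_ge0 a) W0.
  rewrite -{}sum_v in W0; have v0 := psumr_eq0P (fun a _ => v_ge0 a) W0.
  by rewrite big1 ?ltxx // => a _; rewrite u0 // v0 // subrr mul0r.
have scaled_diff (F : 'I_N -> R) :
    \sum_a u a / W * F a - \sum_a v a / W * F a = W^-1 * \sum_a (u a - v a) * F a.
  by rewrite -sumrB mulr_sumr; apply: eq_bigr => a _; rewrite -!mulrBl mulrAC mulrC.
have bary_scaled (g : 'I_N -> R) (S0 : {set 'I_m}) : (forall a, 0 <= g a) ->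
    \sum_a g a = W -> (forall a, g a != 0 -> j a \in S0) ->
    bary t S0 (\sum_a (g a / W) *: pt n (t (j a))) (pushforward j (fun a => g a / W)).
  move=> g_ge0 sum_g gS0; apply: bary_pushforward => [a||a].
  - by rewrite divr_ge0 // ltW.
  - by rewrite -mulr_suml sum_g divff // gt_eqF.
  - by rewrite mulf_eq0 invr_eq0 negb_or => /andP[/gS0].
have same_point : \sum_a (u a / W) *: pt n (t (j a)) = \sum_a (v a / W) *: pt n (t (j a)).
  apply/rowP => e; apply/eqP; rewrite !sum_pt_coord -subr_eq0 scaled_diff.
  by rewrite moment0 ?mulr0 // ltnW.
exists (\sum_a (u a / W) *: pt n (t (j a))); eexists; eexists; split.
- exact: bary_scaled.
- by rewrite same_point; apply: bary_scaled.
- by rewrite -subr_gt0 !sum_pushforwardM scaled_diff mulr_gt0 // invr_gt0.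
Qed.

Lemma alternating_circuit S S' (j : 'I_n.+2 -> 'I_m) : increasing t ->
  (forall a b : 'I_n.+2, (a < b)%N -> (j a < j b)%N) ->
  (forall a : 'I_n.+2, j a \in if odd (n.+1 - a) then S' else S) ->
  exists z lam lam', [/\ bary t S z lam, bary t S' z lam' &
    \sum_i lam' i * t i ^+ n.+1 < \sum_i lam i * t i ^+ n.+1].
Proof.
move=> tinc jinc jS.
have xinc (a b : 'I_n.+2) : (a < b)%N -> t (j a) < t (j b) by move/jinc; apply: tinc.
have xinj : injective (t \o j).
  move=> a b /= tab; apply/eqP; case: (ltngtP a b) => [/xinc|/xinc|/val_inj->//];
  by rewrite tab ltxx.
have [w wmoment] := moment_dual_basis xinj.
have moment0 e : (e < n.+1)%N -> \sum_a w a * t (j a) ^+ e = 0.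
  by move=> en; rewrite wmoment ?(ltnW en) // (ltn_eqF en).
have momentn : 0 < \sum_a w a * t (j a) ^+ n.+1 by rewrite wmoment // eqxx ltr01.
have w_sign (a : 'I_n.+2) : if odd (n.+1 - a) then w a < 0 else 0 < w a.
  have := moment_signs xinc moment0 momentn a; rewrite -signr_odd.
  by case: odd; rewrite ?mulrN1 ?mulr1 ?oppr_gt0.
have split_w (a : 'I_n.+2) :
    (if odd (n.+1 - a) then 0 else w a) - (if odd (n.+1 - a) then - w a else 0) = w a.
  by case: (odd _); rewrite ?sub0r ?opprK ?subr0.
apply: (bary_of_circuit (j := j) (u := fun a => if odd (n.+1 - a) then 0 else w a)
                        (v := fun a => if odd (n.+1 - a) then - w a else 0)).
- by move=> a; have := w_sign a; case: odd => [_|/ltW].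
- by move=> a; have := w_sign a; case: odd => [/ltW|_]; rewrite ?oppr_ge0.
- by move=> a; have := jS a; case: (odd _) => //= _; rewrite eqxx.
- by move=> a; have := jS a; case: (odd _) => //= _; rewrite eqxx.
- by move=> e en; under eq_bigr do rewrite split_w; exact: moment0.
- by under eq_bigr do rewrite split_w.
Qed.

End Barycentric.

Lemma contr_nat_mono v : {homo contr_nat v : i j / (i <= j)%N}.
Proof. by move=> i j; rewrite /contr_nat; case: ifP; case: ifP; lia. Qed.

Lemma bary_contr_set_lift (R : realType) m v n (t : 'I_m.-1 -> R) (S : {set 'I_m})
    (z : 'rV[R]_n) lam i :
  bary t (contr_set v S) z lam -> lam i != 0 -> exists2 j, j \in S & contr_nat v j = i.
Proof.
move=> /bary_mem /[apply]; rewrite inE => /exists_inP[j jS /eqP ->].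
by exists j.
Qed.

Lemma contr_alternation_lift (R : realType) m v n L (t : 'I_m.-1 -> R)
    (S S' : {set 'I_m}) (z : 'rV[R]_n) lam lam' (f : 'I_L.+1 -> 'I_m.-1) :
  bary t (contr_set v S) z lam -> bary t (contr_set v S') z lam' ->
  (forall a b : 'I_L.+1, (a < b)%N -> (f a < f b)%N) ->
  (forall a, 0 < (lam (f a) - lam' (f a)) * (-1) ^+ (L - a)) ->
  exists2 j : 'I_L.+1 -> 'I_m, (forall a b : 'I_L.+1, (a < b)%N -> (j a < j b)%N) &
    forall a, j a \in if odd (L - a) then S' else S.
Proof.
move=> blam blam' finc fsgn.
have [lam_ge0 _ _ _] := blam; have [lam'_ge0 _ _ _] := blam'.
have lift (a : 'I_L.+1) : exists j : 'I_m,
    (j \in if odd (L - a) then S' else S) && (contr_nat v j == f a).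
  have := fsgn a; rewrite -signr_odd; case: (odd _); rewrite ?mulrN1 ?mulr1 => sgn.
  - have [|j jS <-] := bary_contr_set_lift blam' (i := f a).
      by apply/eqP => lam'0; have := lam_ge0 (f a); lra.
    by exists j; rewrite jS eqxx.
  - have [|j jS <-] := bary_contr_set_lift blam (i := f a).
      by apply/eqP => lam0; have := lam'_ge0 (f a); lra.
    by exists j; rewrite jS eqxx.
have [j jP] := fin_all_exists lift.
exists j => [a b ab|a]; last by case/andP: (jP a).
rewrite ltnNge; apply/negP => /(contr_nat_mono v).
have /andP[_ /eqP->] := jP a; have /andP[_ /eqP->] := jP b.
by rewrite leqNgt finc.
Qed.

Unset Implicit Arguments.

Theorem lemma3p6 (R : realType) (n m v : nat)
    (t : 'I_m -> R) (t' : 'I_(m.-1) -> R)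
    (T T' : {set {set 'I_m}}) :
  (1 <= v <= m.-1)%N ->
  increasing t -> increasing t' ->
  triangulation n t T -> triangulation n t T' ->
  le2 n t T T' ->
  le2 n t' (contr_triang v n T) (contr_triang v n T').
Proof.
move=> _ tinc t'inc _ _ le_TT' z Sc Sc' lam lam' _ Sc_in Sc'_in blam blam'.
move: Sc_in Sc'_in; rewrite !inE.
move=> /andP[/exists_inP[S ST /eqP ScE] _] /andP[/exists_inP[S' S'T /eqP Sc'E] _].
rewrite {}ScE in blam; rewrite {}Sc'E in blam'.
rewrite leNgt; apply/negP; rewrite -subr_gt0 -sumrB; under eq_bigr do rewrite -mulrBl.
move/(moment_sign_changes t'inc (bary_diff_moments blam blam')) => [f finc fsgn].
have [j jinc jS] := contr_alternation_lift blam blam' finc fsgn.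
have [z0 [lamA [lamB [bA bB]]]] := alternating_circuit tinc jinc jS.
by rewrite ltNge (le_TT' _ _ _ _ _ (bary_cyclic_polytope bA) ST S'T bA bB).
Qed.
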